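(* Let $X$ be a real Hilbert space, let $L\colon X\to X$ be linear and nonexpansive, let $b\in X$, and let $T\colon X\to X\colon x\mapsto Lx+b$. Let $v:=P_{\overline{\operatorname{ran}}(\mathrm{Id}-T)}0$ and suppose $v\in\operatorname{ran}(\mathrm{Id}-T)$. Let $x\in X$. Then: (i) $v=P_{\operatorname{Fix}L}(-b)\in\operatorname{Fix}L=(\operatorname{ran}(\mathrm{Id}-L))^\perp$, and $v\neq0\iff b\notin\operatorname{ran}(\mathrm{Id}-L)$; (ii) for all $n\in\mathbb N$, $T^nx=L^nx+\sum_{k=0}^{n-1}L^kb$; (iii) for all $n\in\mathbb N$, $T^nx+nv=L^nx+\sum_{k=0}^{n-1}L^kP_{\overline{\operatorname{ran}}(\mathrm{Id}-L)}b$; (iv) for all $n\in\mathbb N$, $(T_{-v})^nx=T^nx+nv$; (v) for all $n\in\mathbb N$, $(T_{-v})^nx=(v+T)^nx$; (vi) $\operatorname{Fix}(T_{-v})=-v+\operatorname{Fix}(T_{-v})=-v+\operatorname{Fix}(v+T)=\operatorname{Fix}(v+T)$; (vii) $\operatorname{Fix}(T_{-v})=\operatorname{Fix}(v+T)=\mathbb Rv+\operatorname{Fix}(v+T)=\mathbb Rv+\operatorname{Fix}(T_{-v})$; consequently $v$ lies in the lineality space of the affine subspace $\operatorname{Fix}(T_{-v})=\operatorname{Fix}(v+T)$.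
   Context: $\overline{\operatorname{ran}}(\mathrm{Id}-T)$ is the closure of the range of $\mathrm{Id}-T$ (a closed convex set, so $v$ is well-defined). $T_{-v}x:=T(x+v)$ and $(v+T)x:=v+Tx$. $\operatorname{Fix}$ denotes the fixed point set, $P_C$ the projection onto a closed convex set $C$. The lineality space of a convex set $C$ is the set of $d$ with $C+\mathbb Rd=C$. *)

From Stdlib Require Import Reals ClassicalEpsilon.
Open Scope R_scope.

Record HilbertSpace := {
  hs_car :> Type;
  hs_zero : hs_car;
  hs_add : hs_car -> hs_car -> hs_car;
  hs_opp : hs_car -> hs_car;
  hs_scal : R -> hs_car -> hs_car;
  hs_inner : hs_car -> hs_car -> R;
  hs_add_assoc : forall x y z, hs_add x (hs_add y z) = hs_add (hs_add x y) z;
  hs_add_comm : forall x y, hs_add x y = hs_add y x;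
  hs_add_0 : forall x, hs_add x hs_zero = x;
  hs_add_opp : forall x, hs_add x (hs_opp x) = hs_zero;
  hs_scal_assoc : forall a b x, hs_scal a (hs_scal b x) = hs_scal (a * b) x;
  hs_scal_1 : forall x, hs_scal 1 x = x;
  hs_scal_distr_l : forall a x y,
      hs_scal a (hs_add x y) = hs_add (hs_scal a x) (hs_scal a y);
  hs_scal_distr_r : forall a b x,
      hs_scal (a + b) x = hs_add (hs_scal a x) (hs_scal b x);
  hs_inner_sym : forall x y, hs_inner x y = hs_inner y x;
  hs_inner_add_l : forall x y z,
      hs_inner (hs_add x y) z = hs_inner x z + hs_inner y z;
  hs_inner_scal_l : forall a x y, hs_inner (hs_scal a x) y = a * hs_inner x y;
  hs_inner_pos : forall x, 0 <= hs_inner x x;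
  hs_inner_def : forall x, hs_inner x x = 0 -> x = hs_zero;
  hs_complete : forall u : nat -> hs_car,
      (forall eps, 0 < eps -> exists N, forall m n, (N <= m)%nat -> (N <= n)%nat ->
         sqrt (hs_inner (hs_add (u m) (hs_opp (u n))) (hs_add (u m) (hs_opp (u n)))) < eps) ->
      exists l, forall eps, 0 < eps -> exists N, forall n, (N <= n)%nat ->
         sqrt (hs_inner (hs_add (u n) (hs_opp l)) (hs_add (u n) (hs_opp l))) < eps
}.

Arguments hs_zero {h}.
Arguments hs_add {h} _ _.
Arguments hs_opp {h} _.
Arguments hs_scal {h} _ _.
Arguments hs_inner {h} _ _.

Section Ops.
Context {X : HilbertSpace}.

Definition vzero : X := hs_zero.
Definition vadd (x y : X) : X := hs_add x y.
Definition vopp (x : X) : X := hs_opp x.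
Definition vsub (x y : X) : X := hs_add x (hs_opp y).
Definition vscal (a : R) (x : X) : X := hs_scal a x.
Definition inner (x y : X) : R := hs_inner x y.
Definition norm (x : X) : R := sqrt (hs_inner x x).

Definition set_eq (A B : X -> Prop) : Prop := forall z, A z <-> B z.

Definition linear_op (L : X -> X) : Prop :=
  (forall x y, L (vadd x y) = vadd (L x) (L y)) /\
  (forall a x, L (vscal a x) = vscal a (L x)).
Definition nonexpansive (T : X -> X) : Prop :=
  forall x y, norm (vsub (T x) (T y)) <= norm (vsub x y).

Definition ran_id_minus (T : X -> X) (y : X) : Prop := exists x, y = vsub x (T x).
Definition closure (S : X -> Prop) (x : X) : Prop :=
  forall eps, 0 < eps -> exists y, S y /\ norm (vsub x y) < eps.
Definition Fix (T : X -> X) (x : X) : Prop := T x = x.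
Definition orth (S : X -> Prop) (x : X) : Prop := forall y, S y -> inner x y = 0.

Definition is_proj (C : X -> Prop) (x p : X) : Prop :=
  C p /\ forall c, C c -> norm (vsub x p) <= norm (vsub x c).
(** P_C x: the (chosen) nearest point of C to x; for a nonempty closed convex
    C in a Hilbert space it exists and is unique, so this is the projection. *)
Definition proj (C : X -> Prop) (x : X) : X :=
  epsilon (inhabits vzero) (fun p => is_proj C x p).

(** Shifted operators T_{-v} x := T (x + v) and (v + T) x := v + T x. *)
Definition shift_in (T : X -> X) (v : X) (x : X) : X := T (vadd x v).
Definition shift_out (v : X) (T : X -> X) (x : X) : X := vadd v (T x).

Definition iter (n : nat) (T : X -> X) (x : X) : X := Nat.iter n T x.
Fixpoint vsum (n : nat) (f : nat -> X) : X :=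
  match n with
  | O => vzero
  | S m => vadd (vsum m f) (f m)
  end.

Definition translate (a : X) (S : X -> Prop) (z : X) : Prop :=
  exists s, S s /\ z = vadd a s.
Definition line_plus (d : X) (S : X -> Prop) (z : X) : Prop :=
  exists t s, S s /\ z = vadd (vscal t d) s.

Definition affine_set (S : X -> Prop) : Prop :=
  forall x y t, S x -> S y -> S (vadd (vscal t x) (vscal (1 - t) y)).
Definition in_lineality (C : X -> Prop) (d : X) : Prop :=
  set_eq (line_plus d C) C.

End Ops.

(* The set ran(Id - T) = ran(Id - L) - b is affine with direction the linear
   subspace ran(Id - L), so its element v of minimal norm is orthogonal to
   ran(Id - L); for a linear nonexpansive L this orthogonal complement is
   exactly Fix L.  Knowing L v = v, one gets T (x + v) = v + T x, hence the two
   shifted operators coincide, their iterates differ from those of T by n v,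
   and their common fixed point set is stable under adding multiples of v.
   Since v + b lies in ran(Id - L), which is orthogonal to both v and Fix L,
   v and b + v are the projections of -b onto Fix L and of b onto the closure
   of ran(Id - L).  That the chosen projection P_{closure ran(Id - T)} 0 really
   is a nearest point comes from completeness, via the parallelogram law
   applied to a minimizing sequence. *)
From Stdlib Require Import Reals Lra Psatz ClassicalEpsilon Classical.
Open Scope R_scope.

Section VectorAlgebra.
Context {X : HilbertSpace}.
Implicit Types x y z : X.

Lemma vadd_assoc x y z : vadd x (vadd y z) = vadd (vadd x y) z.
Proof. apply hs_add_assoc. Qed.
Lemma vadd_comm x y : vadd x y = vadd y x. Proof. apply hs_add_comm. Qed.
Lemma vadd_0 x : vadd x vzero = x. Proof. apply hs_add_0. Qed.
Lemma vadd_opp x : vadd x (vopp x) = vzero. Proof. apply hs_add_opp. Qed.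
Lemma vsub_def x y : vsub x y = vadd x (vopp y). Proof. reflexivity. Qed.

Lemma inner_sym x y : inner x y = inner y x. Proof. apply hs_inner_sym. Qed.
Lemma inner_pos x : 0 <= inner x x. Proof. apply hs_inner_pos. Qed.
Lemma inner_def x : inner x x = 0 -> x = vzero. Proof. apply hs_inner_def. Qed.

Lemma inner_add_l x y z : inner (vadd x y) z = inner x z + inner y z.
Proof. apply hs_inner_add_l. Qed.
Lemma inner_add_r x y z : inner z (vadd x y) = inner z x + inner z y.
Proof. rewrite !(inner_sym z). apply inner_add_l. Qed.
Lemma inner_scal_l t x y : inner (vscal t x) y = t * inner x y.
Proof. apply hs_inner_scal_l. Qed.
Lemma inner_scal_r t x y : inner y (vscal t x) = t * inner y x.
Proof. rewrite !(inner_sym y). apply inner_scal_l. Qed.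

Lemma inner_0_l y : inner vzero y = 0.
Proof.
  pose proof (inner_add_l vzero vzero y) as H.
  rewrite vadd_0 in H. lra.
Qed.
Lemma inner_0_r y : inner y vzero = 0.
Proof. rewrite inner_sym. apply inner_0_l. Qed.

Lemma inner_opp_l x y : inner (vopp x) y = - inner x y.
Proof.
  pose proof (inner_add_l x (vopp x) y) as H.
  rewrite vadd_opp, inner_0_l in H. lra.
Qed.
Lemma inner_opp_r x y : inner y (vopp x) = - inner y x.
Proof. rewrite !(inner_sym y). apply inner_opp_l. Qed.

Lemma veq_by_inner x y : inner (vsub x y) (vsub x y) = 0 -> x = y.
Proof.
  intro H. apply inner_def in H. rewrite vsub_def in H.
  rewrite <- (vadd_0 x), <- (vadd_opp y), (vadd_comm y), vadd_assoc, H,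
    vadd_comm, vadd_0.
  reflexivity.
Qed.

End VectorAlgebra.

Ltac expand :=
  repeat progress rewrite ?vsub_def, ?inner_add_l, ?inner_add_r, ?inner_scal_l,
    ?inner_scal_r, ?inner_opp_l, ?inner_opp_r, ?inner_0_l, ?inner_0_r.

(* A linear identity [x = y] between vectors holds iff [<x - y, x - y> = 0],
   and after full expansion the latter is a polynomial identity in the real
   atoms [inner u w], even without using the symmetry of the inner product. *)
Ltac veq := apply veq_by_inner; expand; field.

Ltac inner_normalize :=
  expand;
  repeat match goal with
  | |- context [inner ?x ?y] =>
      match goal with
      | |- context [inner y x] =>
          tryif constr_eq x y then fail else rewrite (inner_sym y x)
      end
  end.

Lemma lin_le_quad_eq0 (p q : R) : (forall t, 2 * t * p <= t * t * q) -> p = 0.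
Proof.
  intro H. set (k := Rabs q + 1).
  assert (Hk : 0 < k) by (unfold k; pose proof (Rabs_pos q); lra).
  specialize (H (p / k)).
  apply Rmult_le_compat_l with (r := k * k) in H; [|nra].
  replace (k * k * (2 * (p / k) * p)) with (2 * p * p * k) in H by (field; lra).
  replace (k * k * (p / k * (p / k) * q)) with (p * p * q) in H by (field; lra).
  pose proof (Rle_abs q). unfold k in *. nra.
Qed.

Lemma Rinv_INR_S_bounds (n : nat) : 0 < / INR (S n) <= 1.
Proof.
  assert (H1 : 1 <= INR (S n)) by (rewrite S_INR; pose proof (pos_INR n); lra).
  split; [apply Rinv_0_lt_compat; lra|].
  rewrite <- Rinv_1. apply Rinv_le_contravar; lra.
Qed.

Lemma Rinv_INR_S_lt (N n : nat) (e : R) :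
  (0 < N)%nat -> / INR N < e -> (N <= n)%nat -> / INR (S n) < e.
Proof.
  intros HN He Hn. apply Rle_lt_trans with (/ INR N); [|exact He].
  apply Rinv_le_contravar; [apply lt_0_INR; lia | apply le_INR; lia].
Qed.

Section Norm.
Context {X : HilbertSpace}.
Implicit Types x y : X.

Lemma norm_def x : norm x = sqrt (inner x x). Proof. reflexivity. Qed.

Lemma norm_sq x : norm x * norm x = inner x x.
Proof. apply sqrt_sqrt, inner_pos. Qed.

Lemma norm_pos x : 0 <= norm x. Proof. apply sqrt_pos. Qed.

Lemma norm_le_inner x y : norm x <= norm y -> inner x x <= inner y y.
Proof. intro H. apply sqrt_le_0; auto using inner_pos. Qed.

Lemma inner_le_norm x y : inner x x <= inner y y -> norm x <= norm y.
Proof. intro H. apply sqrt_le_1_alt, H. Qed.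

Lemma inner_lt_norm x r : 0 <= r -> inner x x < r * r -> norm x < r.
Proof.
  intros Hr H. rewrite norm_def, <- (sqrt_square r) by exact Hr.
  apply sqrt_lt_1_alt. split; [apply inner_pos | exact H].
Qed.

Lemma norm_sub_sym x y : norm (vsub x y) = norm (vsub y x).
Proof. rewrite !norm_def. f_equal. expand. ring. Qed.

Lemma norm_sub_0l x : norm (vsub vzero x) = norm x.
Proof. rewrite !norm_def. f_equal. expand. ring. Qed.

Lemma inner_sq_le x y : inner x y * inner x y <= inner x x * inner y y.
Proof.
  destruct (Req_dec (inner y y) 0) as [Hy | Hy].
  - apply inner_def in Hy. subst y. rewrite !inner_0_r. lra.
  - set (t := - inner x y / inner y y).
    pose proof (inner_pos (vadd x (vscal t y))) as H.
    revert H. inner_normalize. intro H.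
    assert (HW : 0 < inner y y) by (pose proof (inner_pos y); lra).
    assert (E : inner y y * (inner x x + t * inner x y + t * (inner x y + t * inner y y))
                = inner x x * inner y y - inner x y * inner x y)
      by (unfold t; field; lra).
    nra.
Qed.

Lemma Rabs_inner_le x y : Rabs (inner x y) <= norm x * norm y.
Proof.
  rewrite !norm_def, <- sqrt_mult by apply inner_pos.
  rewrite <- sqrt_Rsqr_abs. apply sqrt_le_1_alt. unfold Rsqr. apply inner_sq_le.
Qed.

Lemma norm_add_le x y : norm (vadd x y) <= norm x + norm y.
Proof.
  pose proof (Rle_abs (inner x y)). pose proof (Rabs_inner_le x y).
  pose proof (norm_sq x). pose proof (norm_sq y).
  pose proof (norm_pos x). pose proof (norm_pos y).
  rewrite (norm_def (vadd x y)), <- (sqrt_square (norm x + norm y)) by lra.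
  apply sqrt_le_1_alt. inner_normalize. nra.
Qed.

Lemma norm_le_add_sub x y : norm x <= norm y + norm (vsub x y).
Proof.
  replace x with (vadd y (vsub x y)) at 1 by veq. apply norm_add_le.
Qed.

End Norm.

Section Closure.
Context {X : HilbertSpace}.

Lemma closure_incl (S : X -> Prop) x : S x -> closure S x.
Proof.
  intros Hx eps He. exists x. split; [exact Hx|].
  apply inner_lt_norm; [lra|]. expand. nra.
Qed.

Lemma orth_closure (S : X -> Prop) z : orth S z -> orth (closure S) z.
Proof.
  intros Hz c Hc.
  assert (Hsmall : forall eps, 0 < eps -> Rabs (inner z c) <= 0 + eps).
  { intros eps He.
    pose proof (norm_pos z) as Hnz.
    destruct (Hc (eps / (norm z + 1))) as [y [Hy Hcy]];
      [apply Rdiv_lt_0_compat; lra|].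
    assert (E : inner z c = inner z (vsub c y)).
    { specialize (Hz y Hy). expand. lra. }
    rewrite E. apply Rle_trans with (norm z * (eps / (norm z + 1))).
    - apply Rle_trans with (norm z * norm (vsub c y)); [apply Rabs_inner_le|].
      apply Rmult_le_compat_l; lra.
    - apply Rmult_le_reg_r with (norm z + 1); [lra|].
      replace (norm z * (eps / (norm z + 1)) * (norm z + 1)) with (norm z * eps)
        by (field; lra).
      nra. }
  apply Rle_plus_epsilon in Hsmall. pose proof (Rabs_pos (inner z c)).
  destruct (Req_dec (inner z c) 0) as [|Hne]; [assumption|].
  pose proof (Rabs_pos_lt _ Hne). lra.
Qed.

End Closure.

Section NearestPoint.
Context {X : HilbertSpace}.
Variable C : X -> Prop.

Lemma norm_inf_exists s0 : C s0 ->
  exists d, 0 <= d /\ (forall s, C s -> d <= norm s) /\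
    (forall e, 0 < e -> exists s, C s /\ norm s < d + e).
Proof.
  intro Hs0.
  set (E := fun r => exists s, C s /\ r = - norm s).
  assert (Hbound : bound E).
  { exists 0. intros r [s [_ ->]]. pose proof (norm_pos s). lra. }
  destruct (completeness E Hbound (ex_intro _ _ (ex_intro _ s0 (conj Hs0 eq_refl))))
    as [m [Hub Hleast]].
  exists (- m). split; [|split].
  - assert (m <= 0); [|lra].
    apply Hleast. intros r [s [_ ->]]. pose proof (norm_pos s). lra.
  - intros s Hs. assert (- norm s <= m) by (apply Hub; exists s; auto). lra.
  - intros e He. apply NNPP. intro Hnone.
    assert (Hub' : is_upper_bound E (m - e)).
    { intros r [s [Hs ->]]. destruct (Rlt_le_dec (norm s) (- m + e)); [|lra].
      exfalso. apply Hnone. eauto. }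
    apply Hleast in Hub'. lra.
Qed.

Lemma minimizing_seq_exists s0 : C s0 ->
  exists d (u : nat -> X), 0 <= d /\ (forall s, C s -> d <= norm s) /\
    (forall n, C (u n) /\ norm (u n) < d + / INR (S n)).
Proof.
  intro Hs0. destruct (norm_inf_exists s0 Hs0) as [d [Hd [Hlow Happrox]]].
  exists d, (fun n => epsilon (inhabits vzero) (fun s => C s /\ norm s < d + / INR (S n))).
  split; [exact Hd|]. split; [exact Hlow|].
  intro n. apply epsilon_spec, Happrox, Rinv_INR_S_bounds.
Qed.

Hypothesis Hmid : forall a c, C a -> C c -> C (vadd (vscal (1/2) a) (vscal (1/2) c)).

Lemma minimizing_dist d a c ea ec :
  0 <= d -> (forall s, C s -> d <= norm s) -> C a -> C c ->
  norm a < d + ea -> norm c < d + ec -> ea <= 1 -> ec <= 1 ->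
  inner (vsub a c) (vsub a c) <= 2 * (2 * d + 1) * (ea + ec).
Proof.
  intros Hd Hlow Ha Hc Hna Hnc Hea Hec.
  set (w := vadd (vscal (1/2) a) (vscal (1/2) c)).
  pose proof (Hlow w (Hmid a c Ha Hc)) as Hw.
  assert (Parallelogram :
    inner (vsub a c) (vsub a c) + 4 * inner w w = 2 * inner a a + 2 * inner c c)
    by (unfold w; expand; field).
  pose proof (Hlow a Ha). pose proof (Hlow c Hc).
  assert (Ha2 : inner a a <= (d + ea) * (d + ea))
    by (rewrite <- norm_sq; apply Rmult_le_compat; lra).
  assert (Hc2 : inner c c <= (d + ec) * (d + ec))
    by (rewrite <- norm_sq; apply Rmult_le_compat; lra).
  assert (Hw2 : d * d <= inner w w)
    by (rewrite <- norm_sq; apply Rmult_le_compat; lra).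
  nra.
Qed.

Lemma minimizing_seq_cauchy d (u : nat -> X) :
  0 <= d -> (forall s, C s -> d <= norm s) ->
  (forall n, C (u n) /\ norm (u n) < d + / INR (S n)) ->
  forall eps, 0 < eps -> exists N, forall m n, (N <= m)%nat -> (N <= n)%nat ->
    norm (vsub (u m) (u n)) < eps.
Proof.
  intros Hd Hlow Hu eps Heps.
  set (K := 2 * (2 * d + 1)).
  destruct (archimed_cor1 (eps * eps / (2 * K))) as [N [HN HN0]];
    [unfold K; apply Rdiv_lt_0_compat; nra|].
  exists N. intros m n Hm Hn.
  pose proof (Rinv_INR_S_lt N m _ HN0 HN Hm).
  pose proof (Rinv_INR_S_lt N n _ HN0 HN Hn).
  destruct (Hu m) as [Hum Hnm]. destruct (Hu n) as [Hun Hnn].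
  pose proof (minimizing_dist d _ _ _ _ Hd Hlow Hum Hun Hnm Hnn
    (proj2 (Rinv_INR_S_bounds m)) (proj2 (Rinv_INR_S_bounds n))) as Hdist.
  apply inner_lt_norm; [lra|].
  assert (HK : 0 < K) by (unfold K; lra).
  assert (K * (/ INR (S m) + / INR (S n)) < K * (2 * (eps * eps / (2 * K))))
    by (apply Rmult_lt_compat_l; lra).
  replace (K * (2 * (eps * eps / (2 * K)))) with (eps * eps) in * by (field; lra).
  fold K in Hdist. lra.
Qed.

Lemma minimizing_seq_limit d (u : nat -> X) l :
  (forall s, C s -> d <= norm s) ->
  (forall n, C (u n) /\ norm (u n) < d + / INR (S n)) ->
  (forall eps, 0 < eps -> exists N, forall n, (N <= n)%nat -> norm (vsub (u n) l) < eps) ->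
  is_proj (closure C) vzero l.
Proof.
  intros Hlow Hu Hl. split.
  - intros eps Heps. destruct (Hl eps Heps) as [N HN]. exists (u N).
    split; [apply Hu|]. rewrite norm_sub_sym. apply HN. lia.
  - intros c Hc. rewrite !norm_sub_0l.
    assert (Hl_le : norm l <= d).
    { apply Rle_plus_epsilon. intros eps He.
      destruct (Hl (eps / 2)) as [N1 HN1]; [lra|].
      destruct (archimed_cor1 (eps / 2)) as [N2 [HN2 HN20]]; [lra|].
      pose proof (Rinv_INR_S_lt N2 (max N1 N2) _ HN20 HN2 (Nat.le_max_r _ _)).
      pose proof (HN1 (max N1 N2) (Nat.le_max_l _ _)) as Hn.
      rewrite norm_sub_sym in Hn.
      pose proof (norm_le_add_sub l (u (max N1 N2))).
      pose proof (proj2 (Hu (max N1 N2))). lra. }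
    assert (Hc_ge : d <= norm c).
    { apply Rle_plus_epsilon. intros eps He.
      destruct (Hc eps He) as [y [Hy Hcy]]. rewrite norm_sub_sym in Hcy.
      pose proof (norm_le_add_sub y c). pose proof (Hlow y Hy). lra. }
    lra.
Qed.

Lemma closure_min_norm_exists s0 : C s0 -> exists p, is_proj (closure C) vzero p.
Proof.
  intro Hs0.
  destruct (minimizing_seq_exists s0 Hs0) as [d [u [Hd [Hlow Hu]]]].
  destruct (hs_complete X u (minimizing_seq_cauchy d u Hd Hlow Hu)) as [l Hl].
  exists l. exact (minimizing_seq_limit d u l Hlow Hu Hl).
Qed.

End NearestPoint.

Section Projection.
Context {X : HilbertSpace}.
Implicit Types (C : X -> Prop) (x p : X).

Lemma proj_spec C x : (exists p, is_proj C x p) -> is_proj C x (proj C x).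
Proof. intro H. unfold proj. apply epsilon_spec, H. Qed.

Lemma proj_eq_of_variational C x p :
  C p -> (forall c, C c -> 0 <= inner (vsub x p) (vsub p c)) -> proj C x = p.
Proof.
  intros Hp Hvar.
  assert (Split : forall c, inner (vsub x c) (vsub x c) =
    inner (vsub x p) (vsub x p) + inner (vsub p c) (vsub p c)
    + 2 * inner (vsub x p) (vsub p c))
    by (intro c; inner_normalize; ring).
  assert (Hproj : is_proj C x p).
  { split; [exact Hp|]. intros c Hc. apply inner_le_norm.
    rewrite (Split c). pose proof (Hvar c Hc). pose proof (inner_pos (vsub p c)). lra. }
  destruct (proj_spec C x (ex_intro _ p Hproj)) as [Hq Hmin].
  pose proof (norm_le_inner _ _ (Hmin p Hp)) as Hle.
  rewrite (Split (proj C x)) in Hle. pose proof (Hvar _ Hq).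
  symmetry. apply veq_by_inner.
  pose proof (inner_pos (vsub p (proj C x))). lra.
Qed.

Lemma min_norm_orth (S : X -> Prop) v w :
  (forall s, S s -> inner v v <= inner s s) ->
  (forall t, S (vadd v (vscal t w))) -> inner v w = 0.
Proof.
  intros Hmin Hline. apply lin_le_quad_eq0 with (q := inner w w). intro t.
  pose proof (Hmin _ (Hline (- t))) as H. revert H. inner_normalize. nra.
Qed.

End Projection.

Section Iterates.
Context {X : HilbertSpace}.
Implicit Types f g : X -> X.

Lemma iter_succ_r n f x : iter (S n) f x = iter n f (f x).
Proof. apply Nat.iter_succ_r. Qed.

Lemma iter_ext f g : (forall x, f x = g x) -> forall n x, iter n f x = iter n g x.
Proof.
  intros H n x. induction n as [|n IH]; [reflexivity|].
  simpl. rewrite IH. apply H.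
Qed.

End Iterates.

Section LinearOperator.
Context {X : HilbertSpace} {L : X -> X}.
Hypothesis HL : linear_op L.

Lemma linear_opp x : L (vopp x) = vopp (L x).
Proof.
  apply veq_by_inner.
  replace (vopp x) with (vscal (-1) x) by veq. rewrite (proj2 HL).
  expand. field.
Qed.

Lemma linear_sub x y : L (vsub x y) = vsub (L x) (L y).
Proof. rewrite !vsub_def, (proj1 HL), linear_opp. reflexivity. Qed.

Lemma linear_0 : L vzero = vzero.
Proof.
  transitivity (L (vsub vzero vzero)); [f_equal; veq|].
  rewrite linear_sub. veq.
Qed.

Lemma Fix_sub x y : Fix L x -> Fix L y -> Fix L (vsub x y).
Proof. unfold Fix. intros Hx Hy. rewrite linear_sub, Hx, Hy. reflexivity. Qed.

Lemma iter_linear_add n x y : iter n L (vadd x y) = vadd (iter n L x) (iter n L y).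
Proof.
  induction n as [|n IH]; [reflexivity|].
  simpl. rewrite IH, (proj1 HL). reflexivity.
Qed.

Lemma iter_Fix n x : Fix L x -> iter n L x = x.
Proof.
  intro Hx. induction n as [|n IH]; [reflexivity|].
  simpl. rewrite IH. exact Hx.
Qed.

Lemma vsum_iter_add_Fix n a v : Fix L v ->
  vsum n (fun k => iter k L (vadd a v)) =
  vadd (vsum n (fun k => iter k L a)) (vscal (INR n) v).
Proof.
  intro Hv. induction n as [|n IH]; [simpl; veq|].
  simpl vsum. rewrite IH, iter_linear_add, (iter_Fix n v Hv), S_INR. veq.
Qed.

Hypothesis HLne : nonexpansive L.

Lemma inner_linear_nonexpansive x : inner (L x) (L x) <= inner x x.
Proof.
  apply norm_le_inner. pose proof (HLne x vzero) as H.
  rewrite linear_0 in H.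
  replace (vsub x vzero) with x in H by veq.
  replace (vsub (L x) vzero) with (L x) in H by veq.
  exact H.
Qed.

Lemma Fix_eq_orth_ran : set_eq (Fix L) (orth (ran_id_minus L)).
Proof.
  intro z. split.
  - intros Hz y [w ->].
    assert (Hq : inner z (L w) - inner z w = 0).
    { apply lin_le_quad_eq0 with (q := inner w w - inner (L w) (L w)). intro t.
      pose proof (inner_linear_nonexpansive (vadd z (vscal t w))) as H.
      rewrite (proj1 HL), (proj2 HL), Hz in H.
      revert H. inner_normalize. nra. }
    expand. lra.
  - intro Hz. unfold Fix. apply veq_by_inner, Rle_antisym; [|apply inner_pos].
    assert (H : inner z (vsub z (L z)) = 0) by (apply Hz; exists z; reflexivity).
    revert H. inner_normalize. pose proof (inner_linear_nonexpansive z). lra.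
Qed.

End LinearOperator.

Section SetAlgebra.
Context {X : HilbertSpace}.
Implicit Types (A B : X -> Prop) (d : X).

Definition line_stable d A : Prop := forall t z, A z -> A (vadd (vscal t d) z).

Lemma set_eq_sym A B : set_eq A B -> set_eq B A.
Proof. intros H z. symmetry. apply H. Qed.

Lemma set_eq_Fix_ext (f g : X -> X) : (forall x, f x = g x) -> set_eq (Fix f) (Fix g).
Proof. intros H z. unfold Fix. rewrite H. reflexivity. Qed.

Lemma translate_set_eq a A B : set_eq A B -> set_eq (translate a A) (translate a B).
Proof. intros H z. split; intros [s [Hs ->]]; exists s; split; auto; apply H; exact Hs. Qed.

Lemma line_plus_set_eq d A B : set_eq A B -> set_eq (line_plus d A) (line_plus d B).
Proof.
  intros H z. split; intros [t [s [Hs ->]]]; exists t, s; split; auto; apply H; exact Hs.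
Qed.

Lemma line_stable_set_eq d A B : set_eq A B -> line_stable d A -> line_stable d B.
Proof. intros H HA t z Hz. apply H, HA, H, Hz. Qed.

Lemma affine_set_eq A B : set_eq A B -> affine_set A -> affine_set B.
Proof. intros H HA x y t Hx Hy. apply H, HA; apply H; assumption. Qed.

Lemma line_stable_translate d A : line_stable d A -> set_eq A (translate (vopp d) A).
Proof.
  intros HA z. split.
  - intro Hz. exists (vadd (vscal 1 d) z). split; [apply HA, Hz | veq].
  - intros [s [Hs ->]].
    replace (vadd (vopp d) s) with (vadd (vscal (-1) d) s) by veq. apply HA, Hs.
Qed.

Lemma line_stable_line_plus d A : line_stable d A -> set_eq A (line_plus d A).
Proof.
  intros HA z. split.
  - intro Hz. exists 0, z. split; [exact Hz | veq].
  - intros [t [s [Hs ->]]]. apply HA, Hs.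
Qed.

End SetAlgebra.

Section AffineOperator.
Context {X : HilbertSpace} {L : X -> X} {b : X} {T : X -> X}.
Hypothesis HL : linear_op L.
Hypothesis HT : forall x, T x = vadd (L x) b.

Lemma ran_id_minus_affine_midpoint a c :
  ran_id_minus T a -> ran_id_minus T c ->
  ran_id_minus T (vadd (vscal (1/2) a) (vscal (1/2) c)).
Proof.
  intros [z1 ->] [z2 ->]. exists (vadd (vscal (1/2) z1) (vscal (1/2) z2)).
  rewrite !HT, (proj1 HL), !(proj2 HL). veq.
Qed.

Lemma ran_id_minus_affine_add s w t :
  ran_id_minus T s -> ran_id_minus T (vadd s (vscal t (vsub w (L w)))).
Proof.
  intros [z ->]. exists (vadd z (vscal t w)).
  rewrite !HT, (proj1 HL), (proj2 HL). veq.
Qed.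

Lemma iter_affine n x : iter n T x = vadd (iter n L x) (vsum n (fun k => iter k L b)).
Proof.
  revert x. induction n as [|n IH]; intro x; [simpl; veq|].
  rewrite !iter_succ_r, IH, HT, (iter_linear_add HL). simpl vsum. veq.
Qed.

Variable v : X.
Hypothesis HvFix : Fix L v.

Lemma iter_affine_add_Fix n x :
  vadd (iter n T x) (vscal (INR n) v) =
  vadd (iter n L x) (vsum n (fun k => iter k L (vadd b v))).
Proof. rewrite (vsum_iter_add_Fix HL n b v HvFix), iter_affine. veq. Qed.

Lemma shift_in_eq_shift_out x : shift_in T v x = shift_out v T x.
Proof. unfold shift_in, shift_out. rewrite !HT, (proj1 HL), HvFix. veq. Qed.

Lemma iter_shift_out n x :
  iter n (shift_out v T) x = vadd (iter n T x) (vscal (INR n) v).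
Proof.
  induction n as [|n IH]; [simpl; veq|].
  unfold iter in *. simpl Nat.iter. rewrite IH. unfold shift_out.
  rewrite !HT, (proj1 HL), (proj2 HL), HvFix, S_INR. veq.
Qed.

Lemma Fix_shift_out_iff z : Fix (shift_out v T) z <-> vadd v (vadd (L z) b) = z.
Proof. unfold Fix, shift_out. rewrite HT. reflexivity. Qed.

Lemma Fix_shift_out_line_stable : line_stable v (Fix (shift_out v T)).
Proof.
  intros t z Hz. rewrite Fix_shift_out_iff in *.
  rewrite (proj1 HL), (proj2 HL), HvFix.
  transitivity (vadd (vscal t v) (vadd v (vadd (L z) b))); [veq | rewrite Hz; reflexivity].
Qed.

Lemma Fix_shift_out_affine : affine_set (Fix (shift_out v T)).
Proof.
  intros y z t Hy Hz. rewrite Fix_shift_out_iff in *.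
  rewrite (proj1 HL), !(proj2 HL).
  transitivity (vadd (vscal t (vadd v (vadd (L y) b)))
                     (vscal (1 - t) (vadd v (vadd (L z) b))));
    [veq | rewrite Hy, Hz; reflexivity].
Qed.

End AffineOperator.

Section MinimalDisplacement.
Context {X : HilbertSpace} {L : X -> X} {b : X} {T : X -> X} {v : X}.
Hypothesis HL : linear_op L.
Hypothesis HLne : nonexpansive L.
Hypothesis HT : forall x, T x = vadd (L x) b.
Hypothesis Hv : v = proj (closure (ran_id_minus T)) vzero.
Hypothesis Hvran : ran_id_minus T v.

Lemma displacement_min_norm s : ran_id_minus T s -> inner v v <= inner s s.
Proof.
  intro Hs.
  assert (Hproj : is_proj (closure (ran_id_minus T)) vzero v).
  { rewrite Hv. apply proj_spec.
    exact (closure_min_norm_exists _ (ran_id_minus_affine_midpoint HL HT) v Hvran). }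
  apply norm_le_inner. rewrite <- (norm_sub_0l v), <- (norm_sub_0l s).
  apply (proj2 Hproj), closure_incl, Hs.
Qed.

Lemma displacement_orth_ran : orth (ran_id_minus L) v.
Proof.
  intros y [w ->]. apply (min_norm_orth _ v _ displacement_min_norm).
  intro t. apply (ran_id_minus_affine_add HL HT), Hvran.
Qed.

Lemma displacement_Fix : Fix L v.
Proof. apply (Fix_eq_orth_ran HL HLne), displacement_orth_ran. Qed.

Lemma displacement_add_b_ran : ran_id_minus L (vadd b v).
Proof. destruct Hvran as [z Hz]. exists z. rewrite Hz, HT. veq. Qed.

Lemma displacement_proj_Fix : v = proj (Fix L) (vopp b).
Proof.
  symmetry. apply proj_eq_of_variational; [exact displacement_Fix|].
  intros f Hf.
  assert (Horth : inner (vsub v f) (vadd b v) = 0).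
  { apply (Fix_eq_orth_ran HL HLne); [|exact displacement_add_b_ran].
    exact (Fix_sub HL v f displacement_Fix Hf). }
  replace (inner (vsub (vopp b) v) (vsub v f)) with (- inner (vsub v f) (vadd b v))
    by (inner_normalize; ring).
  lra.
Qed.

Lemma proj_closure_ran_b : proj (closure (ran_id_minus L)) b = vadd b v.
Proof.
  apply proj_eq_of_variational; [exact (closure_incl _ _ displacement_add_b_ran)|].
  intros c Hc.
  pose proof (orth_closure _ _ displacement_orth_ran) as Horth.
  replace (inner (vsub b (vadd b v)) (vsub (vadd b v) c))
    with (inner v c - inner v (vadd b v)) by (inner_normalize; ring).
  rewrite (Horth c Hc), (Horth _ (closure_incl _ _ displacement_add_b_ran)). lra.
Qed.

Lemma displacement_neq0_iff : v <> vzero <-> ~ ran_id_minus L b.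
Proof.
  split.
  - intros Hv0 [z Hz]. apply Hv0, inner_def.
    assert (H0 : ran_id_minus T vzero) by (exists z; rewrite HT, Hz; veq).
    pose proof (displacement_min_norm _ H0). rewrite inner_0_l in H.
    pose proof (inner_pos v). lra.
  - intros Hb Hv0. apply Hb.
    replace b with (vadd b v) by (rewrite Hv0; veq). exact displacement_add_b_ran.
Qed.

End MinimalDisplacement.

Theorem theorem3p2 (X : HilbertSpace) (L : X -> X) (b : X)
  (HL : linear_op L) (HLne : nonexpansive L)
  (T : X -> X) (HT : forall x, T x = vadd (L x) b)
  (v : X) (Hv : v = proj (closure (ran_id_minus T)) vzero)
  (Hvran : ran_id_minus T v)
  (x : X) :
  (* (i) *)
  (v = proj (Fix L) (vopp b) /\ Fix L v /\
   set_eq (Fix L) (orth (ran_id_minus L)) /\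
   (v <> vzero <-> ~ ran_id_minus L b)) /\
  (* (ii) *)
  (forall n : nat, iter n T x = vadd (iter n L x) (vsum n (fun k => iter k L b))) /\
  (* (iii) *)
  (forall n : nat, vadd (iter n T x) (vscal (INR n) v) =
     vadd (iter n L x)
          (vsum n (fun k => iter k L (proj (closure (ran_id_minus L)) b)))) /\
  (* (iv) *)
  (forall n : nat, iter n (shift_in T v) x = vadd (iter n T x) (vscal (INR n) v)) /\
  (* (v) *)
  (forall n : nat, iter n (shift_in T v) x = iter n (shift_out v T) x) /\
  (* (vi) *)
  (set_eq (Fix (shift_in T v)) (translate (vopp v) (Fix (shift_in T v))) /\
   set_eq (translate (vopp v) (Fix (shift_in T v)))
          (translate (vopp v) (Fix (shift_out v T))) /\
   set_eq (translate (vopp v) (Fix (shift_out v T))) (Fix (shift_out v T))) /\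
  (* (vii) *)
  (set_eq (Fix (shift_in T v)) (Fix (shift_out v T)) /\
   set_eq (Fix (shift_out v T)) (line_plus v (Fix (shift_out v T))) /\
   set_eq (line_plus v (Fix (shift_out v T))) (line_plus v (Fix (shift_in T v))) /\
   affine_set (Fix (shift_in T v)) /\
   in_lineality (Fix (shift_in T v)) v).
Proof.
  pose proof (displacement_Fix HL HLne HT Hv Hvran) as HvFix.
  pose proof (shift_in_eq_shift_out HL HT v HvFix) as Hshift.
  pose proof (set_eq_Fix_ext _ _ Hshift) as HGF.
  pose proof (Fix_shift_out_line_stable HL HT v HvFix) as HF.
  pose proof (line_stable_set_eq _ _ _ (set_eq_sym _ _ HGF) HF) as HG.
  pose proof (iter_ext _ _ Hshift) as Hiter.
  split; [|split; [|split; [|split; [|split; [|split]]]]].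
  - split; [exact (displacement_proj_Fix HL HLne HT Hv Hvran)|].
    split; [exact HvFix|].
    split; [exact (Fix_eq_orth_ran HL HLne) | exact (displacement_neq0_iff HL HT Hv Hvran)].
  - intro n. apply (iter_affine HL HT).
  - intro n. rewrite (proj_closure_ran_b HL HT Hv Hvran).
    apply (iter_affine_add_Fix HL HT v HvFix).
  - intro n. rewrite Hiter. apply (iter_shift_out HL HT v HvFix).
  - intro n. apply Hiter.
  - split; [apply line_stable_translate, HG|].
    split; [apply translate_set_eq, HGF | apply set_eq_sym, line_stable_translate, HF].
  - split; [exact HGF|].
    split; [apply line_stable_line_plus, HF|].
    split; [apply line_plus_set_eq, set_eq_sym, HGF|].
    split; [apply (affine_set_eq _ _ (set_eq_sym _ _ HGF)), (Fix_shift_out_affine HL HT v)|].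
    apply set_eq_sym, line_stable_line_plus, HG.
Qed.
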